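(* Consider an execution of the convergence algorithm described in the context, with $n>5f$ robots of which at most $f$ are Byzantine and $m$ are correct. Let $U_{(1)}(t)\le\dots\le U_{(m)}(t)$ be the sorted positions of the correct robots at time $t$. If a correct robot $i$ with position $x_i$ is elected at time $t$ (i.e., its observation at time $t$ makes it elected), then $x_i\le U_{(f+1)}(t)$ or $x_i\ge U_{(m-f)}(t)$.
   Context: Setting: $n$ robots on the real line, of which at most $f$ are Byzantine (arbitrary positions). Robots observe the multiset $P(t)$ of all $n$ positions, sorted $P_1(t)\le\dots\le P_n(t)$. Algorithm: robot $i$ with position $x_i$ is elected iff $x_i\le P_{f+1}(t)$ or $x_i\ge P_{n-f}(t)$. Only elected robots move, toward the midpoint of $\min(x_i,P_{2f+1}(t))$ and $\max(x_i,P_{n-2f}(t))$. *)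

From mathcomp Require Import all_boot all_order all_algebra.
Set Implicit Arguments. Unset Strict Implicit. Unset Printing Implicit Defensive.
Import Order.TTheory GRing.Theory Num.Theory.
Local Open Scope ring_scope.

(* k-th smallest element (1-indexed) of the multiset s: s_(k) *)
Definition kth (R : realDomainType) (s : seq R) (k : nat) : R :=
  nth 0 (sort <=%R s) k.-1.

Definition all_pos (R : realDomainType) (n : nat) (x : 'I_n -> R) : seq R :=
  [seq x j | j <- enum 'I_n].

Definition correct_pos (R : realDomainType) (n : nat) (x : 'I_n -> R)
  (C : {set 'I_n}) : seq R :=
  [seq x j | j <- enum C].

Definition elected (R : realDomainType) (n f : nat) (x : 'I_n -> R) (i : 'I_n) : bool :=
  (x i <= kth (all_pos x) f.+1) || (kth (all_pos x) (n - f) <= x i).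

From mathcomp Require Import all_boot all_order all_algebra zify.
Import Order.TTheory GRing.Theory Num.Theory.
Local Open Scope ring_scope.

(* Order statistics can only move inwards when the at most f Byzantine
   positions are deleted: P_(f+1) <= U_(f+1), because the f+1 correct robots up
   to U_(f+1) are also among all robots, and symmetrically U_(m-f) <= P_(n-f),
   since deleting n-m points shifts ranks counted from the top by n-m. An
   elected robot lies below P_(f+1) or above P_(n-f), hence below U_(f+1) or
   above U_(m-f). *)

Section OrderStatistics.
Variable R : realDomainType.
Implicit Types (s t : seq R) (v : R).

Let count_sort s (a : pred R) : count a (sort <=%R s) = count a s.
Proof. by apply/permP; rewrite perm_sort. Qed.

Let size_sortR s : size (sort <=%R s) = size s. Proof. exact: size_sort. Qed.

Let nth_sort_le s i j : (i <= j < size s)%N ->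
  nth 0 (sort <=%R s) i <= nth 0 (sort <=%R s) j.
Proof.
case/andP=> ij js; apply: le_sorted_leq_nth; rewrite ?inE ?size_sortR //.
- by apply: sort_sorted; exact: le_total.
- exact: leq_ltn_trans js.
Qed.

Lemma count_le_kth s k : (0 < k <= size s)%N ->
  (k <= count (<= kth s k) s)%N.
Proof.
case/andP=> k0 ks; rewrite -count_sort -(cat_take_drop k (sort _ _)) count_cat.
have sz : size (take k (sort <=%R s)) = k by rewrite size_takel ?size_sortR.
suff /eqP-> : count (<= kth s k) (take k (sort <=%R s)) == size (take k (sort <=%R s)).
  by rewrite sz leq_addr.
rewrite -all_count; apply/(all_nthP 0) => j; rewrite sz => jk.
by rewrite nth_take //= /kth nth_sort_le //; lia.
Qed.

Lemma count_ge_kth s k : (0 < k <= size s)%N ->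
  ((size s - k).+1 <= count (>= kth s k) s)%N.
Proof.
case/andP=> k0 ks; rewrite -count_sort -(cat_take_drop k.-1 (sort _ _)) count_cat.
have sz : size (drop k.-1 (sort <=%R s)) = (size s - k).+1.
  by rewrite size_drop size_sortR; lia.
suff /eqP-> : count (>= kth s k) (drop k.-1 (sort <=%R s)) == size (drop k.-1 (sort <=%R s)).
  by rewrite sz leq_addl.
rewrite -all_count; apply/(all_nthP 0) => j; rewrite sz => jk.
by rewrite nth_drop /= /kth nth_sort_le //; lia.
Qed.

Lemma kth_le s k v : (0 < k <= size s)%N -> (k <= count (<= v) s)%N ->
  kth s k <= v.
Proof.
move=> hk hv; rewrite leNgt; apply/negP => vk.
have : (count (>= kth s k) s <= size s - count (<= v) s)%N.
  rewrite -(count_predC (<= v) s) addKn.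
  by apply: sub_count => y /= ky; rewrite -ltNge (lt_le_trans vk ky).
have := count_ge_kth _ _ hk; lia.
Qed.

Lemma le_kth s k v : (0 < k <= size s)%N ->
  ((size s - k).+1 <= count (>= v) s)%N -> v <= kth s k.
Proof.
move=> hk hv; rewrite leNgt; apply/negP => kv.
have : (count (<= kth s k) s <= size s - count (>= v) s)%N.
  rewrite -(count_predC (>= v) s) addKn.
  by apply: sub_count => y /= yk; rewrite -ltNge (le_lt_trans yk kv).
have := count_le_kth _ _ hk; lia.
Qed.

Lemma kth_subseq_le s t k : subseq s t -> (0 < k <= size s)%N ->
  kth t k <= kth s k.
Proof.
move=> st hk; have ts : (size s <= size t)%N := size_subseq st.
apply: kth_le; first by lia.
exact: leq_trans (count_le_kth _ _ hk) (leq_count_subseq _ st).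
Qed.

Lemma kth_subseq_ge s t k : subseq s t -> (0 < k <= size s)%N ->
  kth s k <= kth t (size t - size s + k).
Proof.
move=> st hk; have ts : (size s <= size t)%N := size_subseq st.
apply: le_kth; first by lia.
have -> : (size t - (size t - size s + k)).+1 = (size s - k).+1 by lia.
exact: leq_trans (count_ge_kth _ _ hk) (leq_count_subseq _ st).
Qed.

End OrderStatistics.

Lemma subseq_correct_pos {R : realDomainType} {n : nat} (x : 'I_n -> R)
    (C : {set 'I_n}) :
  subseq (correct_pos x C) (all_pos x).
Proof. by apply: map_subseq; rewrite enumT /enum_mem filter_subseq. Qed.

Theorem lemma8 (R : realDomainType) (n f : nat) (x : 'I_n -> R)
  (C : {set 'I_n}) (i : 'I_n) :
  (5 * f < n)%N ->
  (#|~: C| <= f)%N ->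
  i \in C ->
  elected f x i ->
  x i <= kth (correct_pos x C) f.+1 \/ kth (correct_pos x C) (#|C| - f) <= x i.
Proof.
move=> hn hbyz _; have sub := subseq_correct_pos x C.
have hC := cardsC C; rewrite card_ord in hC.
have size_all : size (all_pos x) = n by rewrite size_map size_enum_ord.
have size_cor : size (correct_pos x C) = #|C| by rewrite size_map -cardE.
case/orP=> [low|high]; [left|right].
- apply: le_trans low _; apply: kth_subseq_le sub _; rewrite size_cor; lia.
- apply: le_trans _ high.
  have -> : (n - f = size (all_pos x) - size (correct_pos x C) + (#|C| - f))%N.
    by rewrite size_all size_cor; lia.
  apply: kth_subseq_ge sub _; rewrite size_cor; lia.
Qed.
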